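(* Let $\lambda$ be a nonzero real number. For every integer $n\ge0$ and every real $x$ with $1+\lambda x>0$, \[ \mathrm{Bel}_{n,\lambda}(x)=\sum_{k=0}^{n}(1)_{k,\lambda}\Big(\frac{x}{1+\lambda x}\Big)^{k}S_{2}(n,k). \] In particular, if $1+\lambda>0$, then $\mathrm{Bel}_{n,\lambda}:=\mathrm{Bel}_{n,\lambda}(1)=\sum_{k=0}^{n}(1)_{k,\lambda}\big(\frac{1}{1+\lambda}\big)^{k}S_{2}(n,k)$.
   Context: $(1)_{0,\lambda}=1$, $(1)_{k,\lambda}=1(1-\lambda)\cdots(1-(k-1)\lambda)$ for $k\ge1$. $S_2(n,k)$ are the Stirling numbers of the second kind, defined by $x^n=\sum_{k=0}^nS_2(n,k)(x)_k$ with $(x)_k=x(x-1)\cdots(x-k+1)$. $e_\lambda(x)=(1+\lambda x)^{1/\lambda}$, $e_\lambda^{-1}(x)=(1+\lambda x)^{-1/\lambda}$. The new type degenerate Bell polynomials $\mathrm{Bel}_{n,\lambda}(x)$ are defined by $e_{\lambda}(xe^{t})\,e_{\lambda}^{-1}(x)=\big(\frac{1+\lambda xe^t}{1+\lambda x}\big)^{1/\lambda}=\sum_{n=0}^{\infty}\mathrm{Bel}_{n,\lambda}(x)\frac{t^{n}}{n!}$. *)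

From Stdlib Require Import Reals Lra Lia.
From Coquelicot Require Import Coquelicot.
Open Scope R_scope.

Fixpoint falling (x : R) (k : nat) : R :=
  match k with
  | O => 1
  | S k' => falling x k' * (x - INR k')
  end.

Fixpoint deg_falling_one (lam : R) (k : nat) : R :=
  match k with
  | O => 1
  | S k' => deg_falling_one lam k' * (1 - INR k' * lam)
  end.

Fixpoint stirling2 (n k : nat) : R :=
  match n, k with
  | O, O => 1
  | O, S _ => 0
  | S _, O => 0
  | S n', S k' => INR (S k') * stirling2 n' (S k') + stirling2 n' k'
  end.

Lemma stirling2_gt (n k : nat) : (n < k)%nat -> stirling2 n k = 0.
Proof.
  revert k; induction n as [|n IH]; intros [|k] H; simpl; try lia; try reflexivity.
  rewrite !IH by lia. ring.
Qed.

Lemma falling_S (x : R) (k : nat) : falling x (S k) = falling x k * (x - INR k).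
Proof. reflexivity. Qed.

(* Sanity check: these are the numbers defined in the paper by
   x^n = sum_{k=0}^n S_2(n,k) (x)_k. *)
Lemma stirling2_defining (n : nat) (x : R) :
  x ^ n = sum_f_R0 (fun k => stirling2 n k * falling x k) n.
Proof.
  induction n as [|n IH].
  - simpl. ring.
  - (* x^(n+1) = x * sum = sum S(n,k) ((x)_{k+1} + k (x)_k) *)
    assert (E : forall m, (m <= n)%nat ->
      sum_f_R0 (fun k => stirling2 (S n) k * falling x k) m
      = x * sum_f_R0 (fun k => stirling2 n k * falling x k) m
        - stirling2 n m * falling x (S m)).
    { induction m as [|m IHm]; intros Hm.
      - simpl. ring.
      - rewrite !tech5. rewrite IHm by lia.
        replace (stirling2 (S n) (S m)) with
          (INR (S m) * stirling2 n (S m) + stirling2 n m) by reflexivity.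
        rewrite !falling_S, S_INR. ring. }
    rewrite tech5. rewrite E by lia.
    rewrite <- IH. simpl pow.
    replace (stirling2 (S n) (S n)) with
      (INR (S n) * stirling2 n (S n) + stirling2 n n) by reflexivity.
    rewrite (stirling2_gt n (S n)) by lia.
    ring.
Qed.

(* New type degenerate Bell polynomials, defined through their generating
   function  ((1 + lam x e^t)/(1 + lam x))^(1/lam) = sum_n Bel_{n,lam}(x) t^n/n!:
   Bel_{n,lam}(x) is the n-th Taylor coefficient times n!, i.e. the n-th
   derivative in t at t = 0 of the generating function. *)
Definition bell_gf (lam x : R) (t : R) : R :=
  Rpower ((1 + lam * x * exp t) / (1 + lam * x)) (1 / lam).

Definition deg_bell (n : nat) (lam x : R) : R :=
  Derive_n (bell_gf lam x) n 0.

(* Write w(t) = (1 + lam x e^t) / (1 + lam x), so that w' = lam y e^t with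
   y = x / (1 + lam x), and put h_k(t) = (1)_{k,lam} y^k w(t)^(1/lam - k) e^(kt).
   Then h_0 is the generating function, and differentiating the power of w gives
   h_k' = h_{k+1} + k h_k.  This is the recurrence S_2(n+1,k) = k S_2(n,k) +
   S_2(n,k-1) read backwards, so by induction the n-th derivative of the
   generating function is sum_k S_2(n,k) h_k.  At t = 0 we have w = 1, so only
   1 + lam x <> 0 is needed, not its positivity. *)
From Stdlib Require Import Reals Lra Lia.
From Coquelicot Require Import Coquelicot.
Open Scope R_scope.

Lemma sum_stirling2_succ (g : nat -> R) (n : nat) :
  sum_f_R0 (fun k => stirling2 (S n) k * g k) (S n) =
  sum_f_R0 (fun k => stirling2 n k * (g (S k) + INR k * g k)) n.
Proof.
  assert (partial : forall m,
    sum_f_R0 (fun k => stirling2 (S n) k * g k) m =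
    sum_f_R0 (fun k => stirling2 n k * (g (S k) + INR k * g k)) m
    - stirling2 n m * g (S m)).
  { induction m as [|m IH]; [simpl; ring|].
    rewrite !tech5, IH.
    change (stirling2 (S n) (S m)) with (INR (S m) * stirling2 n (S m) + stirling2 n m).
    rewrite S_INR; ring. }
  rewrite partial, tech5, !(stirling2_gt n (S n)) by lia.
  ring.
Qed.

Section BellTerms.

Variables (lam x : R).
Hypothesis lam_neq0 : lam <> 0.
Hypothesis denom_neq0 : 1 + lam * x <> 0.

Definition bell_base (t : R) : R := (1 + lam * x * exp t) / (1 + lam * x).

Definition bell_term (k : nat) (t : R) : R :=
  deg_falling_one lam k * (x / (1 + lam * x)) ^ k
  * Rpower (bell_base t) (1 / lam - INR k) * exp (INR k * t).

Lemma bell_base0 : bell_base 0 = 1.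
Proof. unfold bell_base; rewrite exp_0; field; exact denom_neq0. Qed.

Lemma bell_term_O (t : R) : bell_term 0 t = bell_gf lam x t.
Proof.
  unfold bell_term, bell_gf, bell_base; simpl.
  rewrite Rmult_0_l, exp_0, Rminus_0_r; ring.
Qed.

Lemma bell_term_at0 (k : nat) :
  bell_term k 0 = deg_falling_one lam k * (x / (1 + lam * x)) ^ k.
Proof.
  unfold bell_term, Rpower; rewrite bell_base0, ln_1, !Rmult_0_r, exp_0; ring.
Qed.

Lemma bell_base_pos_near (s : R) :
  0 < bell_base s -> locally s (fun t => 0 < bell_base t).
Proof.
  intros base_pos.
  assert (base_cont : continuous bell_base s).
  { apply (@ex_derive_continuous R_AbsRing R_NormedModule).
    unfold bell_base; auto_derive; exact I. }
  exact (base_cont _ (open_gt 0 _ base_pos)).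
Qed.

(* The factor (1/lam - k) * lam = 1 - k lam produced by the chain rule is the
   next factor of (1)_{k+1,lam}. *)
Lemma is_derive_bell_term (k : nat) (s : R) : 0 < bell_base s ->
  is_derive (bell_term k) s (bell_term (S k) s + INR k * bell_term k s).
Proof.
  intros base_pos.
  unfold bell_term, Rpower.
  unfold bell_base in *.
  set (W := (1 + lam * x * exp s) / (1 + lam * x)) in *.
  auto_derive; [exact base_pos|].
  change ((1 + lam * x * exp s) * / (1 + lam * x)) with W.
  simpl deg_falling_one; rewrite S_INR.
  replace ((1 / lam - (INR k + 1)) * ln W) with ((1 / lam - INR k) * ln W + - ln W)
    by ring.
  replace ((INR k + 1) * s) with (INR k * s + s) by ring.
  rewrite !exp_plus, exp_Ropp, exp_ln by exact base_pos.
  clearbody W; simpl pow.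
  field; repeat split; auto; lra.
Qed.

Lemma Derive_n_bell_gf (n : nat) (s : R) : 0 < bell_base s ->
  Derive_n (bell_gf lam x) n s =
  sum_f_R0 (fun k => stirling2 n k * bell_term k s) n.
Proof.
  revert s; induction n as [|n IH]; intros s base_pos.
  - simpl; rewrite bell_term_O; ring.
  - simpl Derive_n.
    rewrite (Derive_ext_loc _
      (fun t => sum_n (fun k => stirling2 n k * bell_term k t) n)).
    + rewrite (is_derive_unique _ _
        (sum_n (fun k => stirling2 n k * (bell_term (S k) s + INR k * bell_term k s)) n)).
      * rewrite sum_n_Reals; symmetry; apply sum_stirling2_succ.
      * apply (is_derive_sum_n (fun k t => stirling2 n k * bell_term k t)); intros k _.
        apply is_derive_scal, is_derive_bell_term, base_pos.
    + apply (filter_imp (fun t => 0 < bell_base t)); [|apply bell_base_pos_near, base_pos].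
      intros t base_pos_t.
      rewrite IH, sum_n_Reals by exact base_pos_t; reflexivity.
Qed.

Lemma deg_bell_stirling2 (n : nat) :
  deg_bell n lam x =
  sum_f_R0 (fun k => deg_falling_one lam k * (x / (1 + lam * x)) ^ k
                     * stirling2 n k) n.
Proof.
  unfold deg_bell.
  rewrite Derive_n_bell_gf by (rewrite bell_base0; lra).
  apply sum_eq; intros k _.
  rewrite bell_term_at0; ring.
Qed.

End BellTerms.

Theorem theorem11 (lam : R) (Hlam : lam <> 0) :
  (forall (n : nat) (x : R), 0 < 1 + lam * x ->
     deg_bell n lam x =
     sum_f_R0 (fun k => deg_falling_one lam k * (x / (1 + lam * x)) ^ k
                         * stirling2 n k) n)
  /\
  (0 < 1 + lam ->
   forall n : nat,
     deg_bell n lam 1 =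
     sum_f_R0 (fun k => deg_falling_one lam k * (1 / (1 + lam)) ^ k
                         * stirling2 n k) n).
Proof.
  split; [intros n x pos | intros pos n];
    rewrite deg_bell_stirling2 by (assumption || lra).
  - reflexivity.
  - rewrite Rmult_1_r; reflexivity.
Qed.
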